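(* Let $n\ge2$, distinct real $a_1,\dots,a_n$, $F(a)=\sum_{k=0}^nA_ka^k=\prod_{i=1}^n(a-a_i)$, signs $\epsilon_i\in\{\pm1\}$, reals $\xi_i$, $\Delta_i=\epsilon_i(a-a_i)$, $x=\sum_i\xi_i\Delta_i^{-1/2}$ on an open interval $I\subset(0,\infty)$ where all $\Delta_i>0$ and $\dot x\ne0$. Let $H=\Pi^2+aP_y^2$, $\Pi=\frac a{\dot x}P_a$, and let $G,Q_1,Q_2,S_1,S_2$ be defined by $$G=\sum_{k=0}^nA_{n-k}H^{n-k}P_y^{2k},\ Q_1=\sum_{k=1}^n\tilde b_kH^{n-k}\Pi P_y^{2k-1},\ Q_2=\sum_{k=1}^n\tilde c_kH^{n-k}P_y^{2k},\ S_1=Q_1+yG,\ S_2=Q_2+yQ_1+\tfrac{y^2}2G,$$ with $\tilde b_k=(-1)^k\sum_i\frac{\xi_i}{\sqrt{\Delta_i}}\sigma^i_{k-1}$ and $\tilde c_k=\frac{(-1)^{k+1}}2\big(\sum_i\frac{\xi_i^2}{\Delta_i}\sigma^i_{k-1}+\sum_{i\ne j}\frac{\xi_i\xi_j}{\sqrt{\Delta_i\Delta_j}}(\sigma^{ij}_{k-1}+a\sigma^{ij}_{k-2})\big)$. Then $$S_1^2-2G\,S_2=A_n^2\sum_{k,l=1}^n\mathcal{Q}_{kl}\,H^{2n-k-l}P_y^{2(k+l)},\qquad \mathcal{Q}_{kl}=(-1)^{k+l+1}\sum_{i=1}^n\epsilon_i\xi_i^2\,\sigma^i_{k-1}\sig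ma^i_{l-1}.$$
   Context: Symmetric functions: for each $i$, $\sigma^i_m$ ($-1\le m\le n$) by $\prod_{l\neq i}(a-a_l)=\sum_{m=0}^{n-1}(-1)^m\sigma^i_ma^{n-1-m}$ with $\sigma^i_{-1}=\sigma^i_n=0$; for $i\ne j$, $\sigma^{ij}_m$ ($-2\le m\le n$) by $\prod_{l\ne i,j}(a-a_l)=\sum_{m=0}^{n-2}(-1)^m\sigma^{ij}_ma^{n-2-m}$ with $\sigma^{ij}_{-2}=\sigma^{ij}_{-1}=\sigma^{ij}_{n-1}=\sigma^{ij}_n=0$. (Here $A_n=1$.) *)

From HB Require Import structures.
From mathcomp Require Import all_boot all_order all_algebra.
From mathcomp Require Import all_classical all_reals all_analysis.
Set Implicit Arguments. Unset Strict Implicit. Unset Printing Implicit Defensive.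
Import Order.TTheory GRing.Theory Num.Theory.
Local Open Scope ring_scope.

Section Defs.
Variables (R : realType) (n : nat) (a_ : 'I_n -> R).

Definition Fpoly : {poly R} := \prod_(i < n) ('X - (a_ i)%:P).
Definition Acoef (k : nat) : R := Fpoly`_k.

(* sigma^i_m : prod_{l<>i}(a - a_l) = sum_{m=0}^{n-1} (-1)^m sigma^i_m a^{n-1-m},
   with sigma^i_m = 0 for m < 0 or m > n-1 (in particular sigma^i_{-1}=sigma^i_n=0). *)
Definition sig1 (i : 'I_n) (m : int) : R :=
  match m with
  | Posz m' => if (m' < n)%N then
                 (-1) ^+ m' * (\prod_(l < n | l != i) ('X - (a_ l)%:P))`_(n.-1 - m')
               else 0
  | Negz _ => 0
  end.

(* sigma^{ij}_m : prod_{l<>i,j}(a - a_l) = sum_{m=0}^{n-2} (-1)^m sigma^{ij}_m a^{n-2-m},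
   and 0 outside 0 <= m <= n-2. *)
Definition sig2 (i j : 'I_n) (m : int) : R :=
  match m with
  | Posz m' => if (m'.+2 <= n)%N then
                 (-1) ^+ m' *
                 (\prod_(l < n | (l != i) && (l != j)) ('X - (a_ l)%:P))`_(n.-2 - m')
               else 0
  | Negz _ => 0
  end.

Variables (eps xi : 'I_n -> R).

Definition Delta (i : 'I_n) (a : R) : R := eps i * (a - a_ i).

Definition xfun (a : R) : R := \sum_(i < n) xi i / Num.sqrt (Delta i a).

Definition btilde (a : R) (k : nat) : R :=
  (-1) ^+ k * \sum_(i < n) xi i / Num.sqrt (Delta i a) * sig1 i (k%:Z - 1).

Definition ctilde (a : R) (k : nat) : R :=
  (-1) ^+ k.+1 / 2 *
  (\sum_(i < n) xi i ^+ 2 / Delta i a * sig1 i (k%:Z - 1)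
   + \sum_(i < n) \sum_(j < n | j != i)
       xi i * xi j / Num.sqrt (Delta i a * Delta j a)
       * (sig2 i j (k%:Z - 1) + a * sig2 i j (k%:Z - 2))).

Definition Qkl (k l : nat) : R :=
  (-1) ^+ (k + l).+1 *
  \sum_(i < n) eps i * xi i ^+ 2 * sig1 i (k%:Z - 1) * sig1 i (l%:Z - 1).

Definition Pi_ (a Pa : R) : R := a / derive1 xfun a * Pa.
Definition Ham (a Pa Py : R) : R := Pi_ a Pa ^+ 2 + a * Py ^+ 2.

Definition Gfun (a Pa Py : R) : R :=
  \sum_(0 <= k < n.+1) Acoef (n - k) * Ham a Pa Py ^+ (n - k) * Py ^+ (2 * k).
Definition Q1fun (a Pa Py : R) : R :=
  \sum_(1 <= k < n.+1) btilde a k * Ham a Pa Py ^+ (n - k) * Pi_ a Pa * Py ^+ (2 * k - 1).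
Definition Q2fun (a Pa Py : R) : R :=
  \sum_(1 <= k < n.+1) ctilde a k * Ham a Pa Py ^+ (n - k) * Py ^+ (2 * k).
Definition S1fun (a Pa Py y : R) : R := Q1fun a Pa Py + y * Gfun a Pa Py.
Definition S2fun (a Pa Py y : R) : R :=
  Q2fun a Pa Py + y * Q1fun a Pa Py + y ^+ 2 / 2 * Gfun a Pa Py.

End Defs.

From HB Require Import structures.
From mathcomp Require Import all_boot all_order all_algebra.
From mathcomp Require Import all_classical all_reals all_analysis.
From mathcomp Require Import ring zify.
Set Implicit Arguments. Unset Strict Implicit. Unset Printing Implicit Defensive.
Import Order.TTheory GRing.Theory Num.Theory numFieldNormedType.Exports.
Local Open Scope ring_scope.

(* Put z = H / P_y^2 (for P_y = 0 both sides vanish), so that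
   H^(n-k) P_y^(2k) = P_y^(2n) z^(n-k).  The sigma's are the signed coefficients
   of F_i = prod_(l <> i) (X - a_l) and F_ij = prod_(l <> i, j) (X - a_l), hence,
   with v_i = xi_i / sqrt Delta_i,
     G = P_y^(2n) F(z),   Q_1 = - (Pi / P_y) P_y^(2n) sum_i v_i F_i(z),
     2 Q_2 = P_y^(2n) (sum_i v_i^2 F_i(z) + (z - a) sum_(i <> j) v_i v_j F_ij(z)),
   while Pi^2 = (z - a) P_y^2.  The y-terms cancel in S_1^2 - 2 G S_2; since
   F F_ij = F_i F_j the cross terms cancel too, and F = (z - a_i) F_i leaves
   sum_i v_i^2 (a_i - a) F_i(z)^2 = - sum_i eps_i xi_i^2 F_i(z)^2, which is the
   right-hand side written in z. *)

Lemma horner_rev_coef (R : nzRingType) (q : {poly R}) (N : nat) (c : nat -> R) (z : R) :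
  (size q <= N)%N -> (forall m, (m < N)%N -> c m = q`_(N - m.+1)) ->
  \sum_(m < N) c m * z ^+ (N - m.+1) = q.[z].
Proof.
move=> size_q c_coef; rewrite (horner_coef_wide _ size_q) [RHS](reindex_inj rev_ord_inj).
by apply: eq_bigr => m _; rewrite c_coef.
Qed.

Lemma horner_XsubC_mul_rev_coef (R : comNzRingType) (M : nat) (q : {poly R})
    (s : int -> R) (a z : R) :
  (size q <= M)%N ->
  (forall m : nat, (m < M)%N -> s m = (-1) ^+ m * q`_(M - m.+1)) ->
  s M = 0 -> s (-1) = 0 ->
  \sum_(k < M.+1) (-1) ^+ k * (s k + a * s (k%:Z - 1)) * z ^+ (M - k)
    = (z - a) * q.[z].
Proof.
move=> size_q s_coef sM s_1.
have horner_q : \sum_(k < M) (-1) ^+ k * s k * z ^+ (M - k.+1) = q.[z].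
  apply: (horner_rev_coef (c := fun k => (-1) ^+ k * s k)) => // m ltmM.
  by rewrite s_coef // signrMK.
under eq_bigr do rewrite mulrDr mulrDl.
rewrite big_split /= big_ord_recr big_ord_recl /= sM s_1 !(mulr0, mul0r) addr0 add0r.
rewrite mulrBl -horner_q mulr_sumr mulr_sumr -sumrN.
congr (_ + _); apply: eq_bigr => k _.
  by rewrite -subnSK // exprS; ring.
rewrite /bump /= add1n (_ : k.+1%:Z - 1 = k); last lia.
by rewrite exprS; ring.
Qed.

Lemma homog_expr (R : fieldType) (H w : R) (k N : nat) : w != 0 -> (k <= N)%N ->
  H ^+ (N - k) * w ^+ (2 * k) = w ^+ (2 * N) * (H / w ^+ 2) ^+ (N - k).
Proof.
move=> w_neq0 le_kN.
rewrite -{2}(subnK le_kN) mulnDr exprD expr_div_n -exprM.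
by field; rewrite expf_neq0.
Qed.

Lemma homog_sum (R : fieldType) (c : nat -> R) (H w : R) (m N : nat) : w != 0 ->
  \sum_(m <= k < N.+1) c k * H ^+ (N - k) * w ^+ (2 * k)
    = w ^+ (2 * N) * \sum_(m <= k < N.+1) c k * (H / w ^+ 2) ^+ (N - k).
Proof.
move=> w_neq0; rewrite mulr_sumr big_nat_cond [RHS]big_nat_cond.
apply: eq_bigr => k /andP[/andP[_ ltkN] _].
by rewrite -mulrA homog_expr //; ring.
Qed.

Lemma big_nat_expr0n (R : pzSemiRingType) (e : nat -> nat) (m N : nat) (F : nat -> R) :
  (forall k, (m <= k)%N -> (0 < e k)%N) ->
  \sum_(m <= k < N) F k * 0 ^+ e k = 0.
Proof.
move=> e_gt0; rewrite big_nat_cond big1 // => k /andP[/andP[lemk _] _].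
by rewrite expr0n eqn0Ngt e_gt0 // mulr0.
Qed.

Lemma size_XsubC_Mmonic (R : nzRingType) (c : R) (p : {poly R}) :
  p \is monic -> size (('X - c%:P) * p) = (size p).+1.
Proof. by move=> p_monic; rewrite size_Mmonic ?polyXsubC_eq0 // size_XsubC. Qed.

Lemma sqr_sum_offdiag (R : comNzRingType) (n : nat) (u : 'I_n -> R) :
  (\sum_(i < n) u i) ^+ 2 = \sum_(i < n) (u i ^+ 2 + \sum_(j < n | j != i) u i * u j).
Proof.
rewrite expr2 big_distrlr; apply: eq_bigr => i _.
by rewrite (bigD1 i) //= expr2.
Qed.

Section CofactorPolynomials.
Variables (R : realType) (n : nat) (a_ : 'I_n -> R).

Definition Fpoly1 (i : 'I_n) : {poly R} := \prod_(l < n | l != i) ('X - (a_ l)%:P).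
Definition Fpoly2 (i j : 'I_n) : {poly R} :=
  \prod_(l < n | (l != i) && (l != j)) ('X - (a_ l)%:P).

Lemma size_Fpoly : size (Fpoly a_) = n.+1.
Proof. by rewrite size_prod_XsubC /index_enum unlock /= -enumT size_enum_ord. Qed.

Lemma Acoef_deg : Acoef a_ n = 1.
Proof.
have /monicP := monic_prod_XsubC (index_enum 'I_n) predT a_.
by rewrite lead_coefE -/(Fpoly a_) size_Fpoly.
Qed.

Lemma Fpoly_XsubC i : Fpoly a_ = ('X - (a_ i)%:P) * Fpoly1 i.
Proof. by rewrite /Fpoly (bigD1 i). Qed.

Lemma Fpoly1_XsubC i j : j != i -> Fpoly1 i = ('X - (a_ j)%:P) * Fpoly2 i j.
Proof. by move=> neq_ji; rewrite /Fpoly1 (bigD1 j). Qed.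

Lemma Fpoly2C i j : Fpoly2 i j = Fpoly2 j i.
Proof. by apply: eq_bigl => l; rewrite andbC. Qed.

Lemma size_Fpoly1 i : size (Fpoly1 i) = n.
Proof.
have := size_Fpoly; rewrite (Fpoly_XsubC i) size_XsubC_Mmonic ?monic_prod_XsubC //.
by case.
Qed.

Lemma size_Fpoly2 i j : j != i -> size (Fpoly2 i j) = n.-1.
Proof.
move=> neq_ji; have := size_Fpoly1 i.
by rewrite (Fpoly1_XsubC neq_ji) size_XsubC_Mmonic ?monic_prod_XsubC // => <-.
Qed.

Lemma horner_Fpoly1_sig1 i z :
  \sum_(k < n) (-1) ^+ k * sig1 a_ i k * z ^+ (n - k.+1) = (Fpoly1 i).[z].
Proof.
apply: (horner_rev_coef (c := fun k => (-1) ^+ k * sig1 a_ i k)).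
  by rewrite size_Fpoly1.
by move=> m ltmn; rewrite /sig1 ltmn signrMK -predn_sub -subnS.
Qed.

Lemma horner_XsubC_Fpoly2_sig2 i j a z : (2 <= n)%N -> j != i ->
  \sum_(k < n) (-1) ^+ k * (sig2 a_ i j k + a * sig2 a_ i j (k%:Z - 1)) * z ^+ (n - k.+1)
    = (z - a) * (Fpoly2 i j).[z].
Proof.
move=> le2n neq_ji; under eq_bigr do rewrite subnS predn_sub.
have := horner_XsubC_mul_rev_coef (M := n.-1) (q := Fpoly2 i j) (s := sig2 a_ i j) a z.
rewrite prednK; last exact: ltnW.
apply.
- by rewrite size_Fpoly2.
- move=> m ltmn; rewrite /sig2 subnS predn_sub (_ : m.+2 <= n)%N //; lia.
- by rewrite /sig2 (_ : n.-1.+2 <= n = false)%N //; lia.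
- by [].
Qed.

Lemma horner_Fpoly_Fpoly2 i j z : j != i ->
  (Fpoly a_).[z] * (Fpoly2 i j).[z] = (Fpoly1 i).[z] * (Fpoly1 j).[z].
Proof.
move=> neq_ji; rewrite (Fpoly_XsubC i) (Fpoly1_XsubC neq_ji).
rewrite (Fpoly1_XsubC (i := j) (j := i)) 1?eq_sym // Fpoly2C.
by rewrite !hornerM !hornerXsubC; ring.
Qed.

Lemma Fpoly_cofactor_identity (v : 'I_n -> R) (a z : R) :
  (z - a) * (\sum_(i < n) v i * (Fpoly1 i).[z]) ^+ 2
  - (Fpoly a_).[z] * (\sum_(i < n) v i ^+ 2 * (Fpoly1 i).[z]
      + (z - a) * \sum_(i < n) \sum_(j < n | j != i) v i * v j * (Fpoly2 i j).[z])
  = \sum_(i < n) v i ^+ 2 * (a_ i - a) * (Fpoly1 i).[z] ^+ 2.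
Proof.
set u := fun i => v i * (Fpoly1 i).[z].
have cross : (Fpoly a_).[z] * \sum_(i < n) \sum_(j < n | j != i) v i * v j * (Fpoly2 i j).[z]
    = \sum_(i < n) \sum_(j < n | j != i) u i * u j.
  rewrite mulr_sumr; apply: eq_bigr => i _; rewrite mulr_sumr; apply: eq_bigr => j neq_ji.
  by rewrite mulrCA horner_Fpoly_Fpoly2 // /u; ring.
rewrite mulrDr [(Fpoly a_).[z] * (_ * _)]mulrCA cross sqr_sum_offdiag big_split /=.
set C := \sum_(i < n) \sum_(j < n | j != i) u i * u j.
rewrite [LHS](_ : _ = (z - a) * \sum_(i < n) u i ^+ 2
                      - (Fpoly a_).[z] * \sum_(i < n) v i ^+ 2 * (Fpoly1 i).[z]); last by ring.
rewrite !mulr_sumr -sumrB; apply: eq_bigr => i _.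
by rewrite /u (Fpoly_XsubC i) hornerM hornerXsubC; ring.
Qed.

End CofactorPolynomials.

Arguments sig1 : simpl never.
Arguments sig2 : simpl never.

Section Hamiltonian.
Variables (R : realType) (n : nat) (a_ eps xi : 'I_n -> R).

Local Notation v a i := (xi i / Num.sqrt (Delta a_ eps i a)).

Lemma sum_btilde a z :
  \sum_(k < n) btilde a_ eps xi a k.+1 * z ^+ (n - k.+1)
    = - \sum_(i < n) v a i * (Fpoly1 a_ i).[z].
Proof.
transitivity (- \sum_(i < n) \sum_(k < n) v a i * ((-1) ^+ k * sig1 a_ i k * z ^+ (n - k.+1))).
  rewrite exchange_big -sumrN; apply: eq_bigr => k _.
  rewrite /btilde (_ : k.+1%:Z - 1 = k); last lia.
  by rewrite mulr_sumr big_distrl -sumrN /=; apply: eq_bigr => i _; rewrite exprS; ring.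
by congr (- _); apply: eq_bigr => i _; rewrite -horner_Fpoly1_sig1 mulr_sumr.
Qed.

Lemma ctilde_weights a k : (forall i, 0 <= Delta a_ eps i a) ->
  ctilde a_ eps xi a k = (-1) ^+ k.+1 / 2 *
    (\sum_(i < n) v a i ^+ 2 * sig1 a_ i (k%:Z - 1)
     + \sum_(i < n) \sum_(j < n | j != i) v a i * v a j
         * (sig2 a_ i j (k%:Z - 1) + a * sig2 a_ i j (k%:Z - 2))).
Proof.
move=> Delta_ge0; rewrite /ctilde; congr (_ * (_ + _)).
  by apply: eq_bigr => i _; rewrite expr_div_n sqr_sqrtr.
apply: eq_bigr => i _; apply: eq_bigr => j _.
by rewrite sqrtrM // invfM; ring.
Qed.

Lemma sum_ctilde a z : (2 <= n)%N -> (forall i, 0 <= Delta a_ eps i a) ->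
  \sum_(k < n) ctilde a_ eps xi a k.+1 * z ^+ (n - k.+1)
    = 2^-1 * (\sum_(i < n) v a i ^+ 2 * (Fpoly1 a_ i).[z]
        + (z - a) * \sum_(i < n) \sum_(j < n | j != i) v a i * v a j * (Fpoly2 a_ i j).[z]).
Proof.
move=> le2n Delta_ge0.
transitivity (2^-1 *
  (\sum_(k < n) \sum_(i < n) v a i ^+ 2 * ((-1) ^+ k * sig1 a_ i k * z ^+ (n - k.+1))
   + \sum_(k < n) \sum_(i < n) \sum_(j < n | j != i) v a i * v a j
       * ((-1) ^+ k * (sig2 a_ i j k + a * sig2 a_ i j (k%:Z - 1)) * z ^+ (n - k.+1)))).
  rewrite -big_split mulr_sumr; apply: eq_bigr => k _.
  rewrite ctilde_weights // (_ : k.+1%:Z - 1 = k); last lia.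
  rewrite (_ : k.+1%:Z - 2 = k%:Z - 1); last lia.
  rewrite mulrDr mulrDl [RHS]mulrDr !mulr_sumr !big_distrl /=.
  congr (_ + _); apply: eq_bigr => i _; first by rewrite !exprS; ring.
  rewrite mulr_sumr big_distrl mulr_sumr /=.
  by apply: eq_bigr => j _; rewrite !exprS; ring.
congr (_ * (_ + _)).
  rewrite exchange_big; apply: eq_bigr => i _.
  by rewrite -horner_Fpoly1_sig1 mulr_sumr.
rewrite exchange_big mulr_sumr; apply: eq_bigr => i _.
rewrite exchange_big mulr_sumr; apply: eq_bigr => j neq_ji.
by rewrite [RHS]mulrCA -horner_XsubC_Fpoly2_sig2 // mulr_sumr.
Qed.

Lemma sum_Qkl z :
  \sum_(k < n) \sum_(l < n) Qkl a_ eps xi k.+1 l.+1 * z ^+ (n - k.+1) * z ^+ (n - l.+1)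
    = - \sum_(i < n) eps i * xi i ^+ 2 * (Fpoly1 a_ i).[z] ^+ 2.
Proof.
transitivity (- \sum_(i < n) \sum_(k < n) \sum_(l < n) eps i * xi i ^+ 2 *
    ((-1) ^+ k * sig1 a_ i k * z ^+ (n - k.+1) * ((-1) ^+ l * sig1 a_ i l * z ^+ (n - l.+1)))).
  rewrite [in RHS]exchange_big -sumrN; apply: eq_bigr => k _.
  rewrite [in RHS]exchange_big -sumrN; apply: eq_bigr => l _.
  rewrite /Qkl (_ : k.+1%:Z - 1 = k); last lia.
  rewrite (_ : l.+1%:Z - 1 = l); last lia.
  rewrite big_distrr big_distrl big_distrl -sumrN /=; apply: eq_bigr => i _.
  by rewrite addSn addnS !exprS exprD; ring.
congr (- _); apply: eq_bigr => i _.
rewrite [(Fpoly1 a_ i).[z] ^+ 2]expr2 -horner_Fpoly1_sig1 big_distrlr mulr_sumr.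
apply: eq_bigr => k _.
by rewrite mulr_sumr.
Qed.

Lemma weight_sqr_gap a i : 0 < Delta a_ eps i a -> eps i = 1 \/ eps i = -1 ->
  v a i ^+ 2 * (a_ i - a) = - (eps i * xi i ^+ 2).
Proof.
move=> Delta_gt0 eps_sign; rewrite expr_div_n sqr_sqrtr ?ltW //.
move: Delta_gt0; rewrite /Delta => /lt0r_neq0.
by case: eps_sign => -> Delta_neq0; field; move: Delta_neq0; rewrite ?mul1r ?mulN1r ?oppr_eq0.
Qed.

Lemma cofactor_identity_weights a z :
  (forall i, 0 < Delta a_ eps i a) -> (forall i, eps i = 1 \/ eps i = -1) ->
  (z - a) * (\sum_(i < n) v a i * (Fpoly1 a_ i).[z]) ^+ 2
  - (Fpoly a_).[z] * (\sum_(i < n) v a i ^+ 2 * (Fpoly1 a_ i).[z]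
      + (z - a) * \sum_(i < n) \sum_(j < n | j != i) v a i * v a j * (Fpoly2 a_ i j).[z])
  = - \sum_(i < n) eps i * xi i ^+ 2 * (Fpoly1 a_ i).[z] ^+ 2.
Proof.
move=> Delta_gt0 eps_sign; rewrite Fpoly_cofactor_identity -sumrN.
by apply: eq_bigr => i _; rewrite weight_sqr_gap // mulNr.
Qed.

Lemma S1S2_elim_y a Pa Py y :
  S1fun a_ eps xi a Pa Py y ^+ 2 - 2 * Gfun a_ eps xi a Pa Py * S2fun a_ eps xi a Pa Py y
    = Q1fun a_ eps xi a Pa Py ^+ 2 - 2 * Gfun a_ eps xi a Pa Py * Q2fun a_ eps xi a Pa Py.
Proof. by rewrite /S1fun /S2fun; field. Qed.

Lemma Q1fun_Py0 a Pa : Q1fun a_ eps xi a Pa 0 = 0.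
Proof. by apply: (big_nat_expr0n (e := fun k => (2 * k - 1)%N)) => k; lia. Qed.

Lemma Q2fun_Py0 a Pa : Q2fun a_ eps xi a Pa 0 = 0.
Proof. by apply: (big_nat_expr0n (e := fun k => (2 * k)%N)) => k; lia. Qed.

Lemma Qkl_sum_Py0 a Pa :
  \sum_(1 <= k < n.+1) \sum_(1 <= l < n.+1)
    Qkl a_ eps xi k l * Ham a_ eps xi a Pa 0 ^+ (2 * n - k - l) * 0 ^+ (2 * (k + l)) = 0.
Proof.
rewrite big1 // => k _.
by apply: (big_nat_expr0n (e := fun l => (2 * (k + l))%N)) => l; lia.
Qed.

Lemma Gfun_homog a Pa Py : Py != 0 ->
  Gfun a_ eps xi a Pa Py
    = Py ^+ (2 * n) * (Fpoly a_).[Ham a_ eps xi a Pa Py / Py ^+ 2].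
Proof.
move=> Py_neq0; rewrite /Gfun homog_sum // big_mkord; congr (_ * _).
apply: (horner_rev_coef (c := fun k => Acoef a_ (n - k))); first by rewrite size_Fpoly.
by move=> m _; rewrite subSS.
Qed.

Lemma Q1fun_sqr_homog a Pa Py : Py != 0 ->
  Q1fun a_ eps xi a Pa Py ^+ 2 = Py ^+ (2 * n) * Py ^+ (2 * n) *
    ((Ham a_ eps xi a Pa Py / Py ^+ 2 - a) *
     (\sum_(k < n) btilde a_ eps xi a k.+1 * (Ham a_ eps xi a Pa Py / Py ^+ 2) ^+ (n - k.+1))
       ^+ 2).
Proof.
move=> Py_neq0.
have -> : Q1fun a_ eps xi a Pa Py = Pi_ a_ eps xi a Pa / Py *
    (Py ^+ (2 * n) * \sum_(k < n) btilde a_ eps xi a k.+1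
                      * (Ham a_ eps xi a Pa Py / Py ^+ 2) ^+ (n - k.+1)).
  rewrite /Q1fun (_ : \sum_(1 <= k < n.+1) _ = Pi_ a_ eps xi a Pa / Py *
      \sum_(1 <= k < n.+1) btilde a_ eps xi a k * Ham a_ eps xi a Pa Py ^+ (n - k) * Py ^+ (2 * k)).
    by rewrite homog_sum // big_add1 big_mkord.
  rewrite mulr_sumr big_nat_cond [RHS]big_nat_cond; apply: eq_bigr => k /andP[/andP[le1k _] _].
  have -> : Py ^+ (2 * k) = Py ^+ (2 * k - 1) * Py.
    by rewrite -exprSr; congr (_ ^+ _); lia.
  by field.
by rewrite /Ham; field.
Qed.

Lemma Q2fun_homog a Pa Py : Py != 0 ->
  Q2fun a_ eps xi a Pa Py = Py ^+ (2 * n) *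
    \sum_(k < n) ctilde a_ eps xi a k.+1 * (Ham a_ eps xi a Pa Py / Py ^+ 2) ^+ (n - k.+1).
Proof. by move=> Py_neq0; rewrite /Q2fun homog_sum // big_add1 big_mkord. Qed.

Lemma Qkl_sum_homog a Pa Py : Py != 0 ->
  \sum_(1 <= k < n.+1) \sum_(1 <= l < n.+1)
    Qkl a_ eps xi k l * Ham a_ eps xi a Pa Py ^+ (2 * n - k - l) * Py ^+ (2 * (k + l))
  = Py ^+ (2 * n) * Py ^+ (2 * n) *
    \sum_(k < n) \sum_(l < n) Qkl a_ eps xi k.+1 l.+1
      * (Ham a_ eps xi a Pa Py / Py ^+ 2) ^+ (n - k.+1)
      * (Ham a_ eps xi a Pa Py / Py ^+ 2) ^+ (n - l.+1).
Proof.
move=> Py_neq0; rewrite big_add1 big_mkord mulr_sumr; apply: eq_bigr => k _.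
rewrite big_add1 big_mkord mulr_sumr; apply: eq_bigr => l _ /=.
have [ltkn ltln] : (k < n)%N /\ (l < n)%N := conj (ltn_ord k) (ltn_ord l).
set H := Ham a_ eps xi a Pa Py.
have split_pow : H ^+ (2 * n - k.+1 - l.+1) * Py ^+ (2 * (k.+1 + l.+1))
    = (H ^+ (n - k.+1) * Py ^+ (2 * k.+1)) * (H ^+ (n - l.+1) * Py ^+ (2 * l.+1)).
  by rewrite [RHS]mulrACA -!exprD; congr (_ * _); congr (_ ^+ _); lia.
by rewrite -mulrA split_pow !homog_expr //; ring.
Qed.

End Hamiltonian.

Local Open Scope classical_set_scope.

Theorem proposition12 (R : realType) (n : nat) (a_ eps xi : 'I_n -> R) (I : set R) :
  (2 <= n)%N ->
  injective a_ ->
  (forall i, eps i = 1 \/ eps i = -1) ->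
  open I -> is_interval I -> I `<=` [set t : R | 0 < t] ->
  (forall a, I a -> forall i, 0 < Delta a_ eps i a) ->
  (forall a, I a -> derive1 (xfun a_ eps xi) a != 0) ->
  forall a, I a -> forall Pa Py y : R,
    S1fun a_ eps xi a Pa Py y ^+ 2
      - 2 * Gfun a_ eps xi a Pa Py * S2fun a_ eps xi a Pa Py y
    = Acoef a_ n ^+ 2 *
      \sum_(1 <= k < n.+1) \sum_(1 <= l < n.+1)
        Qkl a_ eps xi k l * Ham a_ eps xi a Pa Py ^+ (2 * n - k - l)
          * Py ^+ (2 * (k + l)).
Proof.
move=> le2n _ eps_sign _ _ _ Delta_gt0 _ a Ia Pa Py y.
have {}Delta_gt0 := Delta_gt0 a Ia.
have Delta_ge0 i : 0 <= Delta a_ eps i a by exact/ltW.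
rewrite Acoef_deg expr1n mul1r S1S2_elim_y.
have [-> | Py_neq0] := eqVneq Py 0.
  by rewrite Q1fun_Py0 Q2fun_Py0 Qkl_sum_Py0 mulr0 subr0 expr0n.
rewrite Q1fun_sqr_homog // Gfun_homog // Q2fun_homog // Qkl_sum_homog //.
rewrite sum_btilde sum_ctilde // sum_Qkl -(cofactor_identity_weights _ _ Delta_gt0 eps_sign).
by field.
Qed.
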